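(* Suppose $X$ is spike-free. Let $(W_1,w_2,\lambda)$ be a KKT point (B-subdifferential sense) of the non-convex max-margin problem, and suppose it contains two neurons $i_+,i_-$ with $w_{2,i_\pm}\ne0$ whose associated diagonal matrices satisfy $\hat D_{i_+}\ge\mathrm{diag}(\mathbb I(y=1))$ and $\hat D_{i_-}\ge\mathrm{diag}(\mathbb I(y=-1))$. Then $\lambda$ is dual feasible, i.e. $\max_{u:\|u\|_2\le1}|\lambda^T(Xu)_+|\le1$.
   Context: Binary setting: $X\in\mathbb R^{N\times d}$ rows $x_n$, $y\in\{\pm1\}^N$, $Y=\mathrm{diag}(y)$. $X$ is spike-free if for every $u$ with $\|u\|_2\le1$ there is $z$ with $\|z\|_2\le1$ and $(Xu)_+=Xz$. Non-convex max-margin problem: $\min\frac12(\|W_1\|_F^2+\|w_2\|_2^2)$ s.t. $Y(XW_1)_+w_2\ge\mathbf 1$. KKT point (B-subdifferential): $Y\lambda\ge0$, primal feasibility, $\lambda_n(y_n(x_n^TW_1)_+w_2-1)=0$, $w_2=(XW_1)_+^T\lambda$, and for each $i$, $w_{1,i}=w_{2,i}X^T\hat D_i\lambda$ where $\hat D_i$ is diagonal with $(\hat D_i)_{nn}=1$ if $x_n^Tw_{1,i}>0$, $0$ if $x_n^Tw_{1,i}<0$, $\in\{0,1\}$ if $x_n^Tw_{1,i}=0$. *)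

From HB Require Import structures.
From mathcomp Require Import all_boot all_order all_algebra.
From mathcomp Require Import reals.
Set Implicit Arguments. Unset Strict Implicit. Unset Printing Implicit Defensive.
Import Order.TTheory GRing.Theory Num.Theory.
Local Open Scope ring_scope.

Section Defs.
Variable R : realType.

Definition relu_mx (p q : nat) (A : 'M[R]_(p, q)) : 'M[R]_(p, q) :=
  map_mx (fun x => Num.max x 0) A.

Definition l2norm (k : nat) (u : 'cV[R]_k) : R :=
  Num.sqrt (\sum_(j < k) u j 0 ^+ 2).

Definition spike_free (N d : nat) (X : 'M[R]_(N, d)) : Prop :=
  forall u : 'cV[R]_d, l2norm u <= 1 ->
    exists z : 'cV[R]_d, l2norm z <= 1 /\ relu_mx (X *m u) = X *m z.

Definition diag_of (N : nat) (b : 'I_N -> bool) : 'M[R]_N :=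
  diag_mx (\row_n (b n)%:R).

(* KKT point (B-subdifferential sense) of
   min 1/2(||W1||_F^2 + ||w2||^2) s.t. Y (X W1)_+ w2 >= 1,
   with the family of diagonal matrices Dhat_i encoded by D i. *)
Definition kkt_point (N d m : nat) (X : 'M[R]_(N, d)) (y : 'cV[R]_N)
    (W1 : 'M[R]_(d, m)) (w2 : 'cV[R]_m) (lam : 'cV[R]_N)
    (D : 'I_m -> 'I_N -> bool) : Prop :=
      (forall n, 0 <= y n 0 * lam n 0) /\
      (forall n, 1 <= y n 0 * (relu_mx (X *m W1) *m w2) n 0) /\
      (forall n, lam n 0 * (y n 0 * (relu_mx (X *m W1) *m w2) n 0 - 1) = 0) /\
      w2 = (relu_mx (X *m W1))^T *m lam /\
      (forall i, col i W1 = w2 i 0 *: (X^T *m diag_of (D i) *m lam)) /\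
      forall i n, ((0 < (X *m W1) n i) ==> D i n)
                  && (((X *m W1) n i < 0) ==> ~~ D i n).

Definition dual_feasible (N d : nat) (X : 'M[R]_(N, d)) (lam : 'cV[R]_N) : Prop :=
  forall u : 'cV[R]_d, l2norm u <= 1 -> `|(lam^T *m relu_mx (X *m u)) 0 0| <= 1.

End Defs.

From HB Require Import structures.
From mathcomp Require Import all_boot all_order all_algebra.
From mathcomp Require Import reals.
From mathcomp Require Import ring lra.
Set Implicit Arguments. Unset Strict Implicit. Unset Printing Implicit Defensive.
Import Order.TTheory GRing.Theory Num.Theory.
Local Open Scope ring_scope.

(* For an active neuron i put a_i := X^T D_i lam, so that w_{1,i} = w_{2,i} a_i.
   On the active set of neuron i the ReLU is the identity, hence the KKT
   identity w_{2,i} = lam^T (X w_{1,i})_+ reads w_{2,i} = w_{2,i} ||a_i||^2 and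
   a_i is a unit vector whenever w_{2,i} <> 0.  Given u with ||u|| <= 1,
   spike-freeness writes (X u)_+ = X z with ||z|| <= 1 and X z >= 0.  As
   y lam >= 0, the entries of lam on the class y = -1 are nonpositive, so
   masking them out by D_{i+} can only increase lam^T X z; this gives
   lam^T X z <= lam^T D_{i+} X z = a_{i+}^T z <= 1 by Cauchy-Schwarz, and
   symmetrically lam^T X z >= a_{i-}^T z >= -1. *)

Section RealFacts.
Variable R : realType.

Lemma l2norm_le1 (k : nat) (z : 'cV[R]_k) :
  (l2norm z <= 1) = (\sum_(j < k) z j 0 ^+ 2 <= 1).
Proof. by rewrite /l2norm -{1}sqrtr1 ler_sqrt. Qed.

Lemma ler_norm_sum_mul (k : nat) (a z : 'I_k -> R) :
  2 * `|\sum_j a j * z j| <= \sum_j a j ^+ 2 + \sum_j z j ^+ 2.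
Proof.
have sum_sqrD s : \sum_j (a j + s * z j) ^+ 2 =
    \sum_j a j ^+ 2 + \sum_j z j ^+ 2 + 2 * s * \sum_j a j * z j
    - (1 - s ^+ 2) * \sum_j z j ^+ 2.
  rewrite mulr_sumr mulr_sumr -!big_split -sumrB /=.
  by apply: eq_bigr => j _; ring.
have sum_sqr_ge0 s : 0 <= \sum_j (a j + s * z j) ^+ 2.
  by apply: sumr_ge0 => j _; apply: sqr_ge0.
have := sum_sqr_ge0 1; have := sum_sqr_ge0 (-1).
rewrite !sum_sqrD expr1n sqrrN expr1n subrr !mul0r !subr0.
by case: (ler0P (\sum_j a j * z j)) => _; lra.
Qed.

Lemma norm_sum_mul_le1 (k : nat) (a z : 'I_k -> R) :
  \sum_j a j ^+ 2 = 1 -> \sum_j z j ^+ 2 <= 1 -> `|\sum_j a j * z j| <= 1.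
Proof. by move=> a_unit z_le1; have := ler_norm_sum_mul a z; rewrite a_unit; lra. Qed.

Lemma maxr0_pattern (x : R) (b : bool) :
  ((0 < x) ==> b) && ((x < 0) ==> ~~ b) -> Num.max x 0 = b%:R * x.
Proof.
case: b => /andP [pos neg].
  have x_ge0 : 0 <= x by rewrite leNgt; apply/negP => /(implyP neg).
  by rewrite max_l // mul1r.
have x_le0 : x <= 0 by rewrite leNgt; apply/negP => /(implyP pos).
by rewrite max_r // mul0r.
Qed.

Lemma ler_mask_label (y l v : R) (b : bool) :
  y = 1 \/ y = -1 -> 0 <= y * l -> 0 <= v -> (y = 1 -> b) ->
  l * v <= b%:R * l * v.
Proof.
case: b => [|] y_pm yl_ge0 v_ge0 y1_b; first by rewrite mul1r.
case: y_pm => y_val; first by have := y1_b y_val.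
rewrite y_val mulN1r oppr_ge0 in yl_ge0.
by rewrite mul0r mul0r mulr_le0_ge0.
Qed.

Lemma ger_mask_label (y l v : R) (b : bool) :
  y = 1 \/ y = -1 -> 0 <= y * l -> 0 <= v -> (y = -1 -> b) ->
  b%:R * l * v <= l * v.
Proof.
move=> y_pm yl_ge0 v_ge0 yN1_b.
have yN_pm : - y = 1 \/ - y = -1 by case: y_pm => ->; [right|left]; rewrite ?opprK.
have yNlN_ge0 : 0 <= - y * - l by rewrite mulrNN.
have yN1 : - y = 1 -> b by move=> /eqP; rewrite eqr_oppLR => /eqP /yN1_b.
have := ler_mask_label yN_pm yNlN_ge0 v_ge0 yN1.
by rewrite mulrN !mulNr lerN2.
Qed.

End RealFacts.

Section ActiveNeuron.
Variables (R : realType) (N d m : nat).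
Variables (X : 'M[R]_(N, d)) (W1 : 'M[R]_(d, m)) (w2 : 'cV[R]_m).
Variables (lam : 'cV[R]_N) (D : 'I_m -> 'I_N -> bool).

Definition neuron_dir (i : 'I_m) : 'cV[R]_d := X^T *m diag_of R (D i) *m lam.

Lemma neuron_dirE i k :
  neuron_dir i k 0 = \sum_n X n k * ((D i n)%:R * lam n 0).
Proof.
rewrite /neuron_dir -mulmxA mxE; apply: eq_bigr => n _.
by rewrite /diag_of mul_diag_mx !mxE.
Qed.

Lemma masked_dual_dot i (z : 'cV[R]_d) :
  \sum_n (D i n)%:R * lam n 0 * (X *m z) n 0 = \sum_k neuron_dir i k 0 * z k 0.
Proof.
under eq_bigr => n _ do rewrite mxE mulr_sumr.
rewrite exchange_big /=; apply: eq_bigr => k _.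
by rewrite neuron_dirE mulr_suml; apply: eq_bigr => n _; ring.
Qed.

Hypothesis w2_def : w2 = (relu_mx (X *m W1))^T *m lam.
Hypothesis W1_col : forall i, col i W1 = w2 i 0 *: neuron_dir i.
Hypothesis D_pattern : forall i n,
  ((0 < (X *m W1) n i) ==> D i n) && (((X *m W1) n i < 0) ==> ~~ D i n).

Lemma XW1_neuron n i :
  (X *m W1) n i = w2 i 0 * (X *m neuron_dir i) n 0.
Proof.
rewrite !mxE mulr_sumr; apply: eq_bigr => k _.
have := congr1 (fun M : 'cV_d => M k 0) (W1_col i); rewrite /= !mxE => ->.
by ring.
Qed.

Lemma neuron_dir_unit i : w2 i 0 != 0 -> \sum_k neuron_dir i k 0 ^+ 2 = 1.
Proof.
move=> w2i_neq0.
have w2i_fix : w2 i 0 = w2 i 0 * \sum_k neuron_dir i k 0 ^+ 2.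
  under [in RHS]eq_bigr => k _ do rewrite expr2.
  rewrite -masked_dual_dot {1}w2_def mxE mulr_sumr; apply: eq_bigr => n _.
  by rewrite mxE [relu_mx _ _ _]mxE (maxr0_pattern (D_pattern i n)) XW1_neuron; ring.
by apply: (mulfI w2i_neq0); rewrite mulr1 -w2i_fix.
Qed.

End ActiveNeuron.

Theorem proposition5 (R : realType) (N d m : nat)
    (X : 'M[R]_(N, d)) (y : 'cV[R]_N)
    (W1 : 'M[R]_(d, m)) (w2 : 'cV[R]_m) (lam : 'cV[R]_N)
    (D : 'I_m -> 'I_N -> bool) (ip im : 'I_m) :
  (forall n, y n 0 = 1 \/ y n 0 = -1) ->
  spike_free X ->
  kkt_point X y W1 w2 lam D ->
  ip != im -> w2 ip 0 != 0 -> w2 im 0 != 0 ->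
  (forall n, y n 0 = 1 -> D ip n) ->
  (forall n, y n 0 = -1 -> D im n) ->
  dual_feasible X lam.
Proof.
move=> y_pm spikeX [ylam_ge0 [_ [_ [w2_def [W1_col D_pat]]]]] _ ip_act im_act
  Dp_cover Dm_cover u u_le1.
have [z [z_le1 Xu_relu]] := spikeX u u_le1.
rewrite l2norm_le1 in z_le1.
have Xz_ge0 n : 0 <= (X *m z) n 0.
  by rewrite -Xu_relu mxE le_max lexx orbT.
have -> : (lam^T *m relu_mx (X *m u)) 0 0 = \sum_n lam n 0 * (X *m z) n 0.
  by rewrite Xu_relu mxE; apply: eq_bigr => n _; rewrite mxE.
have upper : \sum_n lam n 0 * (X *m z) n 0 <= \sum_k neuron_dir X lam D ip k 0 * z k 0.
  rewrite -masked_dual_dot; apply: ler_sum => n _.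
  exact: ler_mask_label (y_pm n) (ylam_ge0 n) (Xz_ge0 n) (Dp_cover n).
have lower : \sum_k neuron_dir X lam D im k 0 * z k 0 <= \sum_n lam n 0 * (X *m z) n 0.
  rewrite -masked_dual_dot; apply: ler_sum => n _.
  exact: ger_mask_label (y_pm n) (ylam_ge0 n) (Xz_ge0 n) (Dm_cover n).
have := norm_sum_mul_le1 (neuron_dir_unit w2_def W1_col D_pat ip_act) z_le1.
have := norm_sum_mul_le1 (neuron_dir_unit w2_def W1_col D_pat im_act) z_le1.
move=> /ler_normlP [dot_m_ge _] /ler_normlP [_ dot_p_le].
by apply/ler_normlP; split; lra.
Qed.
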